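(* For every integer $m\ge1$, $$p^{(2m)}=\sum_{a=0}^{m-1}q^{(1-2m)a}\begin{bmatrix}m-1\\ a\end{bmatrix}_{q^2}g^{(2m-2a)},\qquad p^{(2m-1)}=\sum_{a=0}^{m-1}q^{(3-2m)a}\begin{bmatrix}m-1\\ a\end{bmatrix}_{q^2}g^{(2m-2a-1)}.$$ In particular, $p^{(n)}(\kappa)\in\mathbb Z[q,q^{-1}]$ for all $n\ge0$ and all $\kappa=[2\ell]$ with $\ell\in\mathbb Z$.
   Context: $q$ is an indeterminate, $[n]=\frac{q^n-q^{-n}}{q-q^{-1}}$ for $n\in\mathbb Z$, $[n]!=[1]\cdots[n]$, $[0]!=1$. For $0\le a\le N$, $\begin{bmatrix}N\\ a\end{bmatrix}_{q^2}$ denotes the balanced Gaussian binomial coefficient in $q^2$, i.e. $\frac{[N]_{q^2}!}{[a]_{q^2}![N-a]_{q^2}!}$ with $[k]_{q^2}=\frac{q^{2k}-q^{-2k}}{q^2-q^{-2}}$. The polynomials $p_n(x)\in\mathbb Q(q)[x]$ are defined by $p_0=1$, $p_n=0$ for $n<0$, $p_{n+1}=x\,p_n+q^{1-2n}[n][n-1]p_{n-1}$ ($n\ge0$); $p^{(n)}=p_n/[n]!$. The polynomials $g_n(x)$ are $g_{2m}(x)=\prod_{i=0}^{m-1}(x^2-[2i]^2)$ and $g_{2m+1}(x)=x\prod_{i=1}^m(x^2-[2i]^2)$; $g^{(n)}=g_n/[n]!$. *)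

From HB Require Import structures.
From mathcomp Require Import all_boot all_order all_algebra.
Set Implicit Arguments. Unset Strict Implicit. Unset Printing Implicit Defensive.
Import Order.TTheory GRing.Theory Num.Theory.
Local Open Scope ring_scope.

Definition K : fieldType := {fraction {poly rat}}.
Definition q : K := @FracField.tofrac {poly rat} (polyX rat).

Definition qint (n : int) : K := (q ^ n - q ^ (- n)) / (q - q^-1).
Definition qfact (n : nat) : K := \prod_(1 <= i < n.+1) qint i%:Z.

Definition qint2 (n : int) : K :=
  ((q ^+ 2) ^ n - (q ^+ 2) ^ (- n)) / (q ^+ 2 - (q ^+ 2)^-1).
Definition qfact2 (n : nat) : K := \prod_(1 <= i < n.+1) qint2 i%:Z.
Definition qbin2 (N a : nat) : K := qfact2 N / (qfact2 a * qfact2 (N - a)).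

Fixpoint p_seq (n : nat) : {poly K} :=
  match n with
  | 0%N => 1
  | m.+1 =>
    match m with
    | 0%N => 'X
    | k.+1 => 'X * p_seq m
              + (q ^ (1 - 2 * (k.+1)%:Z) * qint (k.+1)%:Z * qint k%:Z)%:P * p_seq k
    end
  end.

Definition p_div (n : nat) : {poly K} := (qfact n)^-1 *: p_seq n.

Definition g_seq (n : nat) : {poly K} :=
  if odd n then 'X * \prod_(1 <= i < (n./2).+1) ('X ^+ 2 - (qint (2 * i%:Z) ^+ 2)%:P)
  else \prod_(0 <= i < n./2) ('X ^+ 2 - (qint (2 * i%:Z) ^+ 2)%:P).

Definition g_div (n : nat) : {poly K} := (qfact n)^-1 *: g_seq n.

Definition in_Zqqinv (x : K) : Prop :=
  exists (k : nat) (c : {poly int}),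
    x = (map_poly (fun z : int => z%:~R : K) c).[q] * q ^- k.

From Pilot Require Import Defs.
From HB Require Import structures.
From mathcomp Require Import all_boot all_order all_algebra.
From mathcomp Require Import ring zify.
Import Order.TTheory GRing.Theory Num.Theory.
Local Open Scope ring_scope.

(* Both families satisfy three-term recurrences:
     [n+2] p^(n+2) = x p^(n+1) + q^(-1-2n) [n] p^(n),
     x g^(2k+1) = [2k+2] g^(2k+2),   x g^(2k+2) = [2k+3] g^(2k+3) + [2k+2] g^(2k+1).
   Substituting the expansions of p^(2m-1) and p^(2m) into the first one and
   rewriting each x g^(j) by the others, the coefficients of every g^(j) agree by
   q-Pascal relations of the Gaussian binomials in q^2, so the expansions follow by
   a joint induction on m.
   At x = [2l] we have [2l]^2 - [2i]^2 = [2]^2 [l+i]_(q^2) [l-i]_(q^2), hence g^(n)([2l])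
   is a product of factors q^j + q^-j and of Gaussian binomials in q^2 whose upper
   entry is an arbitrary integer.  These lie in Z[q, q^-1] by the q-Pascal rule, and
   the expansion carries this over to p^(n)([2l]). *)

(* The objects of Defs over any field in which q is not a root of unity.  Working
   over an abstract field also keeps conversion from ever computing in Q(q). *)
Module QCalculus.
Section Field.

Variables (F : fieldType) (q : F).
Hypothesis q_neq0 : q != 0.
Hypothesis qX_neq1 : forall n, (0 < n)%N -> q ^+ n != 1.

Definition qint (n : int) : F := (q ^ n - q ^ (- n)) / (q - q^-1).
Definition qfact (n : nat) : F := \prod_(1 <= i < n.+1) qint i%:Z.
Definition qint2 (n : int) : F :=
  ((q ^+ 2) ^ n - (q ^+ 2) ^ (- n)) / (q ^+ 2 - (q ^+ 2)^-1).
Definition qfact2 (n : nat) : F := \prod_(1 <= i < n.+1) qint2 i%:Z.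
Definition qbin2 (N a : nat) : F := qfact2 N / (qfact2 a * qfact2 (N - a)).

Fixpoint p_seq (n : nat) : {poly F} :=
  match n with
  | 0%N => 1
  | m.+1 =>
    match m with
    | 0%N => 'X
    | k.+1 => 'X * p_seq m
              + (q ^ (1 - 2 * (k.+1)%:Z) * qint (k.+1)%:Z * qint k%:Z)%:P * p_seq k
    end
  end.
Definition p_div (n : nat) : {poly F} := (qfact n)^-1 *: p_seq n.

Definition g_seq (n : nat) : {poly F} :=
  if odd n then 'X * \prod_(1 <= i < (n./2).+1) ('X ^+ 2 - (qint (2 * i%:Z) ^+ 2)%:P)
  else \prod_(0 <= i < n./2) ('X ^+ 2 - (qint (2 * i%:Z) ^+ 2)%:P).
Definition g_div (n : nat) : {poly F} := (qfact n)^-1 *: g_seq n.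

Definition in_Zqqinv (x : F) : Prop :=
  exists (k : nat) (c : {poly int}),
    x = (map_poly (fun z : int => z%:~R : F) c).[q] * q ^- k.

Lemma qX_neq0 n : q ^+ n != 0.
Proof. exact: expf_neq0. Qed.

Lemma qX_subV_neq0 {n} : (0 < n)%N -> q ^+ n - (q ^+ n)^-1 != 0.
Proof.
move=> n_gt0; have n2_gt0 : (0 < 2 * n)%N by rewrite muln_gt0.
rewrite subr_eq0; apply: contraTneq (qX_neq1 _ n2_gt0) => h.
by rewrite negbK mulnC exprM expr2 {2}h mulfV ?qX_neq0.
Qed.

Lemma expr_mulnC (x : F) m n : x ^+ (m * n) = (x ^+ n) ^+ m.
Proof. by rewrite mulnC exprM. Qed.

Lemma qpow_sub1_neq0 (x : F) n : (0 < n)%N -> x = q ^+ n -> x - 1 != 0.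
Proof. by move=> n_gt0 ->; rewrite subr_eq0 qX_neq1. Qed.

(* Discharges the side conditions of [field]: nonvanishing facts from the context,
   and [x - 1 != 0] for a product [x] of powers of [q] equal to [q ^+ 2], [q ^+ 4]
   or [q ^+ n]. *)
Ltac qpow_sub1 n :=
  apply: (@qpow_sub1_neq0 _ n); [lia | rewrite ?(exprD, exprS, expr_mulnC, expr0); ring].

Tactic Notation "field_q" :=
  field; do ?[apply/andP; split]; first [assumption | qpow_sub1 2%N | qpow_sub1 4%N].
Tactic Notation "field_q" constr(n) :=
  field; do ?[apply/andP; split];
  first [assumption | qpow_sub1 2%N | qpow_sub1 4%N | qpow_sub1 n].

Lemma qsubV_neq0 : q - q^-1 != 0.
Proof. exact: (@qX_subV_neq0 1%N). Qed.

Lemma q2subV_neq0 : q ^+ 2 - (q ^+ 2)^-1 != 0.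
Proof. exact: (@qX_subV_neq0 2%N). Qed.

Lemma qintE (n : nat) : qint n = (q ^+ n - (q ^+ n)^-1) / (q - q^-1).
Proof. by rewrite /qint -exprnP -exprnN. Qed.

Lemma qint2E (n : nat) :
  qint2 n = (q ^+ (2 * n) - (q ^+ (2 * n))^-1) / (q ^+ 2 - (q ^+ 2)^-1).
Proof. by rewrite /qint2 -exprnP -exprnN -exprM. Qed.

Lemma qint0 : qint 0 = 0.
Proof. by rewrite /qint subrr mul0r. Qed.

Lemma qint_neq0 {n : nat} : (0 < n)%N -> qint n != 0.
Proof. by move=> n_gt0; rewrite qintE mulf_neq0 ?invr_neq0 ?qsubV_neq0 ?qX_subV_neq0. Qed.

Lemma qint2_neq0 {n : nat} : (0 < n)%N -> qint2 n != 0.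
Proof.
by move=> n_gt0; rewrite qint2E mulf_neq0 ?invr_neq0 ?q2subV_neq0 ?qX_subV_neq0 ?muln_gt0.
Qed.

Lemma qfactS n : qfact n.+1 = qfact n * qint n.+1.
Proof. by rewrite /qfact big_nat_recr. Qed.

Lemma qfact2S n : qfact2 n.+1 = qfact2 n * qint2 n.+1.
Proof. by rewrite /qfact2 big_nat_recr. Qed.

Lemma qfact0 : qfact 0 = 1.
Proof. by rewrite /qfact big_geq. Qed.

Lemma qfact2_0 : qfact2 0 = 1.
Proof. by rewrite /qfact2 big_geq. Qed.

Lemma qfact_neq0 n : qfact n != 0.
Proof. by elim: n => [|n IHn]; rewrite ?qfact0 ?oner_neq0 // qfactS mulf_neq0 ?qint_neq0. Qed.

Lemma qfact2_neq0 n : qfact2 n != 0.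
Proof. by elim: n => [|n IHn]; rewrite ?qfact2_0 ?oner_neq0 // qfact2S mulf_neq0 ?qint2_neq0. Qed.

(** * Recurrences *)

Lemma p_seqSS n : p_seq n.+2 =
  'X * p_seq n.+1 + (q ^ (1 - 2 * n.+1%:Z) * qint n.+1 * qint n) *: p_seq n.
Proof. by rewrite -mul_polyC. Qed.

Lemma p_div_rec n : qint n.+2 *: p_div n.+2 =
  'X * p_div n.+1 + (q ^ (1 - 2 * n.+1%:Z) * qint n) *: p_div n.
Proof.
have f_neq0 := qfact_neq0 n; have i1_neq0 := qint_neq0 (ltn0Sn n).
have i2_neq0 := qint_neq0 (ltn0Sn n.+1).
rewrite /p_div p_seqSS !scalerDr !scalerA -scalerAr !qfactS.
by congr (_ *: _ + _ *: _); field_q.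
Qed.

Lemma g_seq_double k :
  g_seq (2 * k) = \prod_(0 <= i < k) ('X ^+ 2 - (qint (2 * i%:Z) ^+ 2)%:P).
Proof. by rewrite /g_seq mul2n odd_double doubleK. Qed.

Lemma g_seq_double_succ k :
  g_seq (2 * k).+1 = 'X * \prod_(1 <= i < k.+1) ('X ^+ 2 - (qint (2 * i%:Z) ^+ 2)%:P).
Proof. by rewrite /g_seq /= mul2n odd_double uphalf_double. Qed.

Lemma g_seq_even_rec k : g_seq (2 * k.+1) = 'X * g_seq (2 * k).+1.
Proof.
rewrite g_seq_double g_seq_double_succ big_nat_recl // mulr0 qint0 expr0n subr0.
by rewrite big_add1 expr2 mulrA.
Qed.

Lemma g_seq_odd_rec k : g_seq (2 * k.+1).+1 =
  g_seq (2 * k).+1 * ('X ^+ 2 - (qint (2 * k.+1%:Z) ^+ 2)%:P).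
Proof. by rewrite !g_seq_double_succ big_nat_recr //= mulrA. Qed.

Lemma g_div0 : g_div 0 = 1.
Proof. by rewrite /g_div qfact0 invr1 scale1r /g_seq big_geq. Qed.

Lemma X_g_div_odd k : 'X * g_div (2 * k).+1 = qint (2 * k).+2 *: g_div (2 * k.+1).
Proof.
rewrite /g_div g_seq_even_rec -scalerAr scalerA mulnS; congr (_ *: _).
have f_neq0 := qfact_neq0 (2 * k).+1; have i_neq0 := qint_neq0 (ltn0Sn (2 * k).+1).
by rewrite [qfact _.+2]qfactS; field_q.
Qed.

Lemma X_g_div_even k : 'X * g_div (2 * k.+1) =
  qint (2 * k).+3 *: g_div (2 * k.+1).+1 + qint (2 * k).+2 *: g_div (2 * k).+1.
Proof.
have X_g_seq : 'X * g_seq (2 * k.+1) =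
    g_seq (2 * k.+1).+1 + qint (2 * k).+2 ^+ 2 *: g_seq (2 * k).+1.
  rewrite g_seq_odd_rec g_seq_even_rec -mul_polyC.
  rewrite (_ : 2 * k.+1%:Z = (2 * k).+2); first by ring.
  by rewrite natz -PoszM mulnS.
rewrite /g_div -scalerAr X_g_seq scalerDr !scalerA mulnS.
rewrite [qfact (2 * k).+3]qfactS [qfact (2 * k).+2]qfactS.
have f_neq0 := qfact_neq0 (2 * k).+1; have i2_neq0 := qint_neq0 (ltn0Sn (2 * k).+1).
have i3_neq0 := qint_neq0 (ltn0Sn (2 * k).+2).
by congr (_ *: _ + _ *: _); field_q.
Qed.

(** * Expansion of p^(n) in the g^(n) *)

Definition even_coef (m a : nat) : F := q ^ ((1 - 2 * m%:Z) * a%:Z) * qbin2 (m - 1) a.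
Definition odd_coef (m a : nat) : F := q ^ ((3 - 2 * m%:Z) * a%:Z) * qbin2 (m - 1) a.

Lemma qbin2n0 n : qbin2 n 0 = 1.
Proof. by rewrite /qbin2 subn0 qfact2_0 mul1r divff ?qfact2_neq0. Qed.

Lemma qbin2nn n : qbin2 n n = 1.
Proof. by rewrite /qbin2 subnn qfact2_0 mulr1 divff ?qfact2_neq0. Qed.

Lemma even_coef0 m : even_coef m 0 = 1.
Proof. by rewrite /even_coef mulr0 expr0z qbin2n0 mulr1. Qed.

Lemma odd_coef0 m : odd_coef m 0 = 1.
Proof. by rewrite /odd_coef mulr0 expr0z qbin2n0 mulr1. Qed.

Lemma qbin2SS_mul x y :
  qbin2 (x + y).+1 x.+1 * qint2 x.+1 = qbin2 (x + y) x * qint2 (x + y).+1.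
Proof.
rewrite /qbin2 subSS !addKn !qfact2S.
have := qfact2_neq0 x; have := qfact2_neq0 y; have := qfact2_neq0 (x + y).
have := qint2_neq0 (ltn0Sn x); have := qint2_neq0 (ltn0Sn (x + y)).
by move=> *; field_q.
Qed.

Lemma qbin2nS_mul x y :
  qbin2 (x + y).+1 x.+1 * qint2 x.+1 = qbin2 (x + y).+1 x * qint2 y.+1.
Proof.
rewrite /qbin2 subSS addKn -addnS addKn !qfact2S.
have := qfact2_neq0 x; have := qfact2_neq0 y; have := qfact2_neq0 (x + y).
have := qint2_neq0 (ltn0Sn x); have := qint2_neq0 (ltn0Sn y).
by move=> *; field_q.
Qed.

Lemma expqz_subn (e e0 : int) (n : nat) : e = e0 - n%:Z -> q ^ e = q ^ e0 / q ^+ n.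
Proof. by move->; rewrite expfzDr // -exprnN. Qed.

Lemma expqz_addn (e e0 : int) (n : nat) : e = e0 + n%:Z -> q ^ e = q ^ e0 * q ^+ n.
Proof. by move->; rewrite expfzDr // -exprnP. Qed.

Lemma expqz_oppn (e : int) (n : nat) : e = - n%:Z -> q ^ e = (q ^+ n)^-1.
Proof. by move->; rewrite -exprnN. Qed.

Lemma qint2_expz (x : int) :
  qint2 x = (q ^ (2 * x) - q ^ (- (2 * x))) / (q ^+ 2 - (q ^+ 2)^-1).
Proof. by rewrite /qint2 !exprnP !exprz_exp mulrN mulrC. Qed.

Lemma expqzD (m n : int) : q ^ (m + n) = q ^ m * q ^ n.
Proof. exact: expfzDr. Qed.

Lemma expqzN (m : int) : q ^ (- m) = (q ^ m)^-1.
Proof. by rewrite invr_expz. Qed.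

Lemma expqz2 (m : int) : q ^ (2 * m) = (q ^ m) ^+ 2.
Proof. by rewrite exprnP exprz_exp mulrC. Qed.

Lemma expqz_nat (n : nat) : q ^ n%:Z = q ^+ n.
Proof. by []. Qed.

Lemma coef_even_step M a : (a <= M)%N ->
  odd_coef M.+2 a.+1 * qint (2 * (M - a)).+2
  + (q ^ (1 - 2 * (2 * M).+3%:Z) * qint (2 * M).+2) * even_coef M.+1 a
  = qint (2 * M).+4 * even_coef M.+2 a.+1.
Proof.
move=> le_aM; have [b ->] : exists b, M = (a + b)%N by exists (M - a)%N; lia.
rewrite /even_coef /odd_coef !subSS !subn0 addKn.
(* All exponents of [q] differ from [w] by linear terms, which [field] can handle. *)
set w := (1 - 2 * (a + b).+1%:Z) * a%:Z.
rewrite (@expqz_subn ((3 - 2 * (a + b).+2%:Z) * a.+1%:Z) w (2 * a + 2 * b + 1)); last by nia.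
rewrite (@expqz_subn ((1 - 2 * (a + b).+2%:Z) * a.+1%:Z) w (4 * a + 2 * b + 3)); last by nia.
rewrite (@expqz_oppn (1 - 2 * ((2 * (a + b)).+3)%:Z) (4 * a + 4 * b + 5)); last by nia.
have i_neq0 := qint2_neq0 (ltn0Sn a).
rewrite (canRL (mulfK i_neq0) (qbin2SS_mul a b)).
rewrite !qintE !qint2E ?(exprD, exprS, expr_mulnC, expr0).
have := qX_neq0 a; have := qX_neq0 b; have : q ^ w != 0 by rewrite expfz_neq0.
by move=> *; field_q (4 * a + 4)%N.
Qed.

Lemma coef_odd_step M a : (a < M)%N ->
  even_coef M.+1 a.+1 * qint (2 * (M - a.+1)).+3
  + (even_coef M.+1 a * qint (2 * (M - a)).+2
     + (q ^ (1 - 2 * (2 * M).+2%:Z) * qint (2 * M).+1) * odd_coef M.+1 a)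
  = qint (2 * M).+3 * odd_coef M.+2 a.+1.
Proof.
move=> lt_aM; have [b ->] : exists b, M = (a + b).+1 by exists (M - a.+1)%N; lia.
rewrite /even_coef /odd_coef !subSS !subn0 addKn (_ : (a + b).+1 - a = b.+1)%N; last by lia.
set w := (1 - 2 * (a + b).+2%:Z) * a%:Z.
rewrite (@expqz_subn ((1 - 2 * (a + b).+2%:Z) * a.+1%:Z) w (2 * a + 2 * b + 3)); last by nia.
rewrite (@expqz_addn ((3 - 2 * (a + b).+2%:Z) * a%:Z) w (2 * a)); last by nia.
rewrite (@expqz_subn ((3 - 2 * (a + b).+3%:Z) * a.+1%:Z) w (2 * a + 2 * b + 3)); last by nia.
rewrite (@expqz_oppn (1 - 2 * ((2 * (a + b).+1).+2)%:Z) (4 * a + 4 * b + 7)); last by nia.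
have i_neq0 := qint2_neq0 (ltn0Sn a).
rewrite (canRL (mulfK i_neq0) (qbin2nS_mul a b)).
have := qbin2SS_mul a b.+1; rewrite addnS => /(canRL (mulfK i_neq0)) ->.
rewrite !qintE !qint2E ?(exprD, exprS, expr_mulnC, expr0).
have := qX_neq0 a; have := qX_neq0 b; have : q ^ w != 0 by rewrite expfz_neq0.
by move=> *; field_q (4 * a + 4)%N.
Qed.

Lemma coef_odd_step_last M :
  even_coef M.+1 M * qint (2 * (M - M)).+2
  + (q ^ (1 - 2 * (2 * M).+2%:Z) * qint (2 * M).+1) * odd_coef M.+1 M
  = qint (2 * M).+3 * odd_coef M.+2 M.+1.
Proof.
rewrite /even_coef /odd_coef !subSS !subn0 subnn !qbin2nn !mulr1.
set w := (1 - 2 * M.+1%:Z) * M%:Z.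
rewrite (@expqz_addn ((3 - 2 * M.+1%:Z) * M%:Z) w (2 * M)); last by nia.
rewrite (@expqz_subn ((3 - 2 * M.+2%:Z) * M.+1%:Z) w (2 * M + 1)); last by nia.
rewrite (@expqz_oppn (1 - 2 * ((2 * M).+2)%:Z) (4 * M + 3)); last by nia.
rewrite !qintE ?(exprD, exprS, expr_mulnC, expr0).
have := qX_neq0 M; have : q ^ w != 0 by rewrite expfz_neq0.
by move=> *; field_q.
Qed.

Definition even_expansion M := p_div (2 * M.+1) =
  \sum_(0 <= a < M.+1) even_coef M.+1 a *: g_div (2 * (M - a).+1).

Definition odd_expansion M := p_div (2 * M).+1 =
  \sum_(0 <= a < M.+1) odd_coef M.+1 a *: g_div (2 * (M - a)).+1.

Lemma odd_expansionS {M} : even_expansion M -> odd_expansion M -> odd_expansion M.+1.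
Proof.
rewrite /even_expansion /odd_expansion => p_even p_odd.
rewrite (_ : (2 * M.+1).+1 = (2 * M).+3)%N; last by lia.
apply: (scalerI (qint_neq0 (ltn0Sn (2 * M).+2))).
rewrite (_ : 2 * M.+1 = (2 * M).+2)%N in p_even; last by lia.
rewrite p_div_rec p_even p_odd mulr_sumr scaler_sumr.
under eq_bigr => a _ do rewrite -scalerAr X_g_div_even scalerDr !(scalerA _ _ (g_div _)).
rewrite big_split /=.
under [X in _ + _ + X]eq_bigr => a _ do rewrite (scalerA _ _ (g_div _)).
rewrite -addrA -big_split /=.
under [X in _ + X]eq_bigr => a _ do rewrite -scalerDl.
rewrite big_nat_recl // big_nat_recr //=.
rewrite scaler_sumr big_nat_recl //.
under [X in _ = _ + X]eq_bigr => a _ do rewrite (scalerA _ _ (g_div _)) subSS.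
rewrite big_nat_recr //= (scalerA _ _ (g_div _)).
rewrite even_coef0 odd_coef0 coef_odd_step_last !subn0 mulr1 mul1r.
rewrite -!addrA; congr (_ + _).
rewrite !addrA; congr (_ + _).
rewrite -big_split; apply: eq_big_nat => a /andP [_ lt_aM].
rewrite (_ : (2 * (M - a.+1).+1).+1 = (2 * (M - a)).+1)%N; last by lia.
by rewrite /= -scalerDl coef_odd_step.
Qed.

Lemma even_expansionS {M} : even_expansion M -> odd_expansion M.+1 -> even_expansion M.+1.
Proof.
rewrite /even_expansion /odd_expansion => p_even p_odd.
rewrite (_ : 2 * M.+2 = (2 * M).+4)%N; last by lia.
apply: (scalerI (qint_neq0 (ltn0Sn (2 * M).+3))).
rewrite (_ : 2 * M.+1 = (2 * M).+2)%N in p_even; last by lia.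
rewrite (_ : (2 * M.+1).+1 = (2 * M).+3)%N in p_odd; last by lia.
rewrite p_div_rec p_even p_odd mulr_sumr !scaler_sumr.
under eq_bigr => a _ do rewrite -scalerAr X_g_div_odd !(scalerA _ _ (g_div _)).
under [X in _ + X]eq_bigr => a _ do rewrite (scalerA _ _ (g_div _)).
under [X in _ = X]eq_bigr => a _ do rewrite (scalerA _ _ (g_div _)).
rewrite big_nat_recl // [X in _ = X]big_nat_recl //.
under eq_bigr => a _ do rewrite subSS.
under [X in _ = _ + X]eq_bigr => a _ do rewrite subSS.
rewrite even_coef0 odd_coef0 subn0 mulr1 mul1r (_ : (2 * M.+1).+2 = (2 * M).+4)%N; last by lia.
rewrite -addrA; congr (_ + _).
rewrite -big_split; apply: eq_big_nat => a /andP [_ le_aM].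
by rewrite /= -scalerDl coef_even_step.
Qed.

Lemma p_div1 : p_div 1 = g_div 1.
Proof. by rewrite /p_div /g_div /g_seq /= big_geq // mulr1. Qed.

Lemma odd_expansion0 : odd_expansion 0.
Proof. by rewrite /odd_expansion big_nat1 odd_coef0 scale1r p_div1. Qed.

Lemma even_expansion0 : even_expansion 0.
Proof.
rewrite /even_expansion big_nat1 even_coef0 scale1r.
apply: (scalerI (qint_neq0 (ltn0Sn 1))).
by rewrite p_div_rec qint0 mulr0 scale0r addr0 p_div1 (X_g_div_odd 0).
Qed.

Lemma p_div_expansions M : even_expansion M /\ odd_expansion M.
Proof.
elim: M => [|M [p_even p_odd]]; first exact: (conj even_expansion0 odd_expansion0).
have p_oddS := odd_expansionS p_even p_odd.
exact: (conj (even_expansionS p_even p_oddS) p_oddS).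
Qed.

Lemma p_div_expansion m : (1 <= m)%N ->
  p_div (2 * m) =
    \sum_(0 <= a < m) (q ^ ((1 - 2 * m%:Z) * a%:Z) * qbin2 (m - 1) a) *: g_div (2 * m - 2 * a)
  /\
  p_div (2 * m - 1) =
    \sum_(0 <= a < m) (q ^ ((3 - 2 * m%:Z) * a%:Z) * qbin2 (m - 1) a) *: g_div (2 * m - 2 * a - 1).
Proof.
case: m => // M _; have [p_even p_odd] := p_div_expansions M.
split.
  rewrite p_even; apply: eq_big_nat => a /andP[_ lt_aM].
  by rewrite (_ : 2 * M.+1 - 2 * a = 2 * (M - a).+1)%N; last lia.
rewrite (_ : 2 * M.+1 - 1 = (2 * M).+1)%N; last by lia.
rewrite p_odd; apply: eq_big_nat => a /andP[_ lt_aM].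
by rewrite (_ : 2 * M.+1 - 2 * a - 1 = (2 * (M - a)).+1)%N; last lia.
Qed.

(** * Integrality at x = [2l] *)

Lemma in_Zqqinv_int (z : int) : in_Zqqinv z%:~R.
Proof. by exists 0%N, z%:P; rewrite map_polyC hornerC expr0 invr1 mulr1. Qed.

Lemma in_Zqqinv0 : in_Zqqinv 0.
Proof. exact: (in_Zqqinv_int 0). Qed.

Lemma in_Zqqinv1 : in_Zqqinv 1.
Proof. exact: (in_Zqqinv_int 1). Qed.

Lemma in_Zqqinv_qX n : in_Zqqinv (q ^+ n).
Proof. by exists 0%N, 'X^n; rewrite rmorphXn /= map_polyX hornerXn expr0 invr1 mulr1. Qed.

Lemma in_Zqqinv_qVX n : in_Zqqinv (q ^- n).
Proof. by exists n, 1; rewrite rmorph1 hornerC mul1r. Qed.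

Lemma in_Zqqinv_qz (z : int) : in_Zqqinv (q ^ z).
Proof. by case: z => n; [exact: in_Zqqinv_qX | exact: in_Zqqinv_qVX]. Qed.

Lemma in_ZqqinvM x y : in_Zqqinv x -> in_Zqqinv y -> in_Zqqinv (x * y).
Proof.
move=> [k1 [c1 ->]] [k2 [c2 ->]]; exists (k1 + k2)%N, (c1 * c2).
by rewrite rmorphM hornerM exprD invfM; ring.
Qed.

Lemma in_ZqqinvD x y : in_Zqqinv x -> in_Zqqinv y -> in_Zqqinv (x + y).
Proof.
move=> [k1 [c1 ->]] [k2 [c2 ->]]; exists (k1 + k2)%N, (c1 * 'X^k2 + c2 * 'X^k1).
rewrite rmorphD !rmorphM !rmorphXn /= map_polyX hornerD !hornerM !hornerXn exprD invfM.
by have := qX_neq0 k1; have := qX_neq0 k2; move=> *; field_q.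
Qed.

Lemma in_ZqqinvN x : in_Zqqinv x -> in_Zqqinv (- x).
Proof. by move=> [k [c ->]]; exists k, (- c); rewrite rmorphN hornerN mulNr. Qed.

Lemma in_ZqqinvB x y : in_Zqqinv x -> in_Zqqinv y -> in_Zqqinv (x - y).
Proof. by move=> Zx /in_ZqqinvN; apply: in_ZqqinvD. Qed.

Lemma in_Zqqinv_sum (I : Type) (r : seq I) (P : pred I) (E : I -> F) :
  (forall i, P i -> in_Zqqinv (E i)) -> in_Zqqinv (\sum_(i <- r | P i) E i).
Proof. by move=> ZE; apply: big_ind; [exact: in_Zqqinv0 | exact: in_ZqqinvD |]. Qed.

Lemma in_Zqqinv_prod (I : Type) (r : seq I) (P : pred I) (E : I -> F) :
  (forall i, P i -> in_Zqqinv (E i)) -> in_Zqqinv (\prod_(i <- r | P i) E i).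
Proof. by move=> ZE; apply: big_ind; [exact: in_Zqqinv1 | exact: in_ZqqinvM |]. Qed.

Ltac qexpand :=
  rewrite /qint ?qint2_expz;
  rewrite ?(opprD, opprK, mulrDr, mulrN, mulrBr, expqzD, expqzN, expqz2, expqz_nat, expr1z, expr0z);
  rewrite ?(exprD, exprS, expr_mulnC, expr0).

Lemma qint_double (x : int) : qint (2 * x) = qint 2 * qint2 x.
Proof.
qexpand; have qx_neq0 : q ^ x != 0 by rewrite expfz_neq0.
by field_q.
Qed.

Lemma qint_sqr_sub (x y : int) :
  qint (2 * x) ^+ 2 - qint (2 * y) ^+ 2 = qint 2 ^+ 2 * qint2 (x + y) * qint2 (x - y).
Proof.
qexpand; have qx_neq0 : q ^ x != 0 by rewrite expfz_neq0.
have qy_neq0 : q ^ y != 0 by rewrite expfz_neq0.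
by field_q.
Qed.

Lemma qint_mul_qint2 (x y : int) :
  qint (2 * x) * qint2 (2 * y) = qint (2 * y) * (qint2 (x + y) + qint2 (x - y)).
Proof.
qexpand; have qx_neq0 : q ^ x != 0 by rewrite expfz_neq0.
have qy_neq0 : q ^ y != 0 by rewrite expfz_neq0.
by field_q.
Qed.

Lemma qint2_qplus (j : nat) : qint 2 * qint2 j = qint j * (q ^+ j + (q ^+ j)^-1).
Proof. qexpand; have := qX_neq0 j; move=> *; by field_q. Qed.

Lemma qint2D (x y : int) : qint2 (x + y) = q ^ (2 * y) * qint2 x + q ^ (- (2 * x)) * qint2 y.
Proof.
qexpand; have qx_neq0 : q ^ x != 0 by rewrite expfz_neq0.
have qy_neq0 : q ^ y != 0 by rewrite expfz_neq0.
by field_q.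
Qed.

Definition qfall2 (N : int) (a : nat) : F := \prod_(0 <= j < a) qint2 (N - j%:Z).
Definition qbinz2 (N : int) (a : nat) : F := qfall2 N a / qfact2 a.

Lemma qfall2n0 N : qfall2 N 0 = 1.
Proof. by rewrite /qfall2 big_geq. Qed.

Lemma qfall2_recl N a : qfall2 (N + 1) a.+1 = qint2 (N + 1) * qfall2 N a.
Proof.
rewrite /qfall2 big_nat_recl // subr0; congr (_ * _).
by apply: eq_bigr => j _; rewrite intS opprD addrA addrK.
Qed.

Lemma qfall2_recr N a : qfall2 N a.+1 = qfall2 N a * qint2 (N - a%:Z).
Proof. by rewrite /qfall2 big_nat_recr. Qed.

Lemma qfall2_0S a : qfall2 0 a.+1 = 0.
Proof. by rewrite /qfall2 big_nat_recl // subr0 /qint2 oppr0 subrr !mul0r. Qed.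

Lemma qfall2_qfact2 a b : qfall2 (b + a)%N a * qfact2 b = qfact2 (b + a).
Proof.
elim: a => [|a IHa]; first by rewrite qfall2n0 mul1r addn0.
rewrite addnS (_ : (b + a).+1%:Z = (b + a)%N%:Z + 1); last by rewrite intS addrC.
by rewrite qfall2_recl -mulrA IHa qfact2S mulrC intS addrC.
Qed.

Lemma qbin2_qbinz2 M a : (a <= M)%N -> qbin2 M a = qbinz2 M a.
Proof.
move=> le_aM; rewrite /qbin2 /qbinz2 -(subnK le_aM) addnK -qfall2_qfact2.
have := qfact2_neq0 a; have := qfact2_neq0 (M - a); move=> *.
by field_q.
Qed.

Lemma qbinz2_pascal N a : qbinz2 (N + 1) a.+1 =
  q ^ (2 * a.+1%:Z) * qbinz2 N a.+1 + q ^ (2 * (a%:Z - N)) * qbinz2 N a.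
Proof.
have qint2_N1 : qint2 (N + 1) =
    q ^ (2 * a.+1%:Z) * qint2 (N - a%:Z) + q ^ (2 * (a%:Z - N)) * qint2 a.+1.
  rewrite -[N + 1](_ : N - a%:Z + a.+1%:Z = N + 1) ?qint2D; last by rewrite intS; ring.
  by rewrite (_ : - (2 * (N - a%:Z)) = 2 * (a%:Z - N)) //; ring.
rewrite /qbinz2 qfall2_recl qfall2_recr qfact2S qint2_N1.
have := qfact2_neq0 a; have := qint2_neq0 (ltn0Sn a); move=> *.
by field_q.
Qed.

Lemma in_Zqqinv_qbinz2 N a : in_Zqqinv (qbinz2 N a).
Proof.
(* Induction on [a], then on [|N|]: for [N < 0] the Pascal rule is solved for the
   term with smaller upper entry. *)
elim: a N => [|a IHa] N; first by rewrite /qbinz2 qfall2n0 qfact2_0 divr1; exact: in_Zqqinv1.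
suff Z_pm n : in_Zqqinv (qbinz2 n%:Z a.+1) /\ in_Zqqinv (qbinz2 (- n%:Z) a.+1).
  by case: N => n; [case: (Z_pm n) | rewrite NegzE; case: (Z_pm n.+1)].
elim: n => [|n [Zpos Zneg]].
  by rewrite oppr0 /qbinz2 qfall2_0S mul0r; split; exact: in_Zqqinv0.
split.
  rewrite intS addrC qbinz2_pascal.
  by apply: in_ZqqinvD; apply: in_ZqqinvM => //; exact: in_Zqqinv_qz.
have -> : qbinz2 (- n.+1%:Z) a.+1 = q ^ (- (2 * a.+1%:Z)) *
    (qbinz2 (- n%:Z) a.+1 - q ^ (2 * (a%:Z + n.+1%:Z)) * qbinz2 (- n.+1%:Z) a).
  rewrite (_ : - n%:Z = - n.+1%:Z + 1) ?qbinz2_pascal ?opprK ?addrK; last first.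
    by rewrite intS opprD addrAC subrr add0r.
  by rewrite expqzN mulKf ?expfz_neq0.
apply: in_ZqqinvM; first exact: in_Zqqinv_qz.
by apply: in_ZqqinvB => //; apply: in_ZqqinvM => //; exact: in_Zqqinv_qz.
Qed.

Definition qplus_prod (n : nat) : F := \prod_(1 <= j < n.+1) (q ^+ j + (q ^+ j)^-1).

Lemma qplus_prodS n : qplus_prod n.+1 = qplus_prod n * (q ^+ n.+1 + (q ^+ n.+1)^-1).
Proof. by rewrite /qplus_prod big_nat_recr. Qed.

Lemma in_Zqqinv_qplus_prod n : in_Zqqinv (qplus_prod n).
Proof.
by apply: in_Zqqinv_prod => j _; apply: in_ZqqinvD; [exact: in_Zqqinv_qX | exact: in_Zqqinv_qVX].
Qed.

Lemma qfact2_qplus_prod n : qint 2 ^+ n * qfact2 n = qfact n * qplus_prod n.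
Proof.
elim: n => [|n IHn]; first by rewrite qfact2_0 qfact0 /qplus_prod big_geq // expr0 mulr1.
rewrite exprS qfact2S qfactS qplus_prodS.
transitivity ((qint 2 * qint2 n.+1) * (qint 2 ^+ n * qfact2 n)); first by ring.
by rewrite qint2_qplus IHn; ring.
Qed.

Section GEval.

Variable l : int.
Local Notation x := (qint (2 * l)).

Lemma g_seq_odd_eval k :
  (g_seq (2 * k).+1).[x] = qint 2 ^+ (2 * k).+1 * qfall2 (l + k%:Z) (2 * k).+1.
Proof.
elim: k => [|k IHk].
  by rewrite /g_seq /= big_geq // mulr1 hornerX addr0 qfall2_recr qfall2n0 mul1r subr0 qint_double.
rewrite g_seq_odd_rec hornerM IHk hornerD hornerN hornerXn hornerC qint_sqr_sub.
rewrite (_ : (2 * k.+1).+1 = (2 * k).+3)%N; last by lia.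
rewrite (_ : l + k.+1%:Z = l + k%:Z + 1); last by rewrite intS; ring.
rewrite qfall2_recl [qfall2 _ (2 * k).+2]qfall2_recr.
rewrite (_ : l + k%:Z - (2 * k).+1%:Z = l - k.+1%:Z); last by rewrite !intS; ring.
by rewrite !exprS; ring.
Qed.

Lemma g_div_odd_eval k :
  (g_div (2 * k).+1).[x] = qplus_prod (2 * k).+1 * qbinz2 (l + k%:Z) (2 * k).+1.
Proof.
have f_neq0 := qfact_neq0 (2 * k).+1; have f2_neq0 := qfact2_neq0 (2 * k).+1.
rewrite /g_div hornerZ g_seq_odd_eval /qbinz2.
rewrite -[qplus_prod _](mulKf f_neq0) -qfact2_qplus_prod.
by field_q.
Qed.

Lemma g_div_even_eval k : (g_div (2 * k.+1)).[x] =
  qplus_prod (2 * k).+1 * (qbinz2 (l + k%:Z + 1) (2 * k).+2 + qbinz2 (l + k%:Z) (2 * k).+2).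
Proof.
have i_neq0 := qint_neq0 (ltn0Sn (2 * k).+1).
apply: (mulfI i_neq0); rewrite -hornerZ -X_g_div_odd hornerM hornerX g_div_odd_eval.
rewrite /qbinz2 qfall2_recl [qfall2 _ (2 * k).+2]qfall2_recr [qfact2 (2 * k).+2]qfact2S.
have key : x * qint2 (2 * k).+2 =
    qint (2 * k).+2 * (qint2 (l + k%:Z + 1) + qint2 (l + k%:Z - (2 * k).+1%:Z)).
  have two_k1 : 2 * k.+1%:Z = (2 * k).+2 by rewrite natz -PoszM mulnS.
  rewrite -two_k1 qint_mul_qint2 (_ : l + k%:Z + 1 = l + k.+1%:Z); last by rewrite intS; ring.
  by rewrite (_ : l + k%:Z - (2 * k).+1%:Z = l - k.+1%:Z) //; rewrite !intS; ring.
have Q_neq0 := qint2_neq0 (ltn0Sn (2 * k).+1).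
have f2_neq0 := qfact2_neq0 (2 * k).+1.
rewrite (canRL (mulfK Q_neq0) key).
by field_q.
Qed.

Lemma in_Zqqinv_g_div_eval n : in_Zqqinv (g_div n).[x].
Proof.
rewrite -(odd_double_half n) -mul2n; case: (odd n); rewrite ?add0n ?add1n.
  rewrite g_div_odd_eval; apply: in_ZqqinvM; [exact: in_Zqqinv_qplus_prod | exact: in_Zqqinv_qbinz2].
case: n./2 => [|k]; first by rewrite muln0 g_div0 hornerC; exact: in_Zqqinv1.
rewrite g_div_even_eval; apply: in_ZqqinvM; first exact: in_Zqqinv_qplus_prod.
by apply: in_ZqqinvD; exact: in_Zqqinv_qbinz2.
Qed.

Lemma in_Zqqinv_g_div_comb_eval (c : nat -> F) (d : nat -> nat) M :
  (forall a, (a < M)%N -> in_Zqqinv (c a)) ->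
  in_Zqqinv (\sum_(0 <= a < M) c a *: g_div (d a)).[x].
Proof.
move=> cZ; rewrite horner_sum big_nat_cond; apply: in_Zqqinv_sum => a /andP[/andP[_ lt_aM] _].
by rewrite hornerZ; apply: in_ZqqinvM; [exact: cZ | exact: in_Zqqinv_g_div_eval].
Qed.

End GEval.

Lemma in_Zqqinv_qbin2 M a : (a <= M)%N -> in_Zqqinv (qbin2 M a).
Proof. by move=> le_aM; rewrite qbin2_qbinz2 //; exact: in_Zqqinv_qbinz2. Qed.

Lemma in_Zqqinv_p_div_eval n (l : int) : in_Zqqinv (p_div n).[qint (2 * l)].
Proof.
have coefZ (e : int) M a : (a < M.+1)%N -> in_Zqqinv (q ^ e * qbin2 (M.+1 - 1) a).
  by move=> lt_aM; rewrite subn1; apply: in_ZqqinvM; [exact: in_Zqqinv_qz | exact: in_Zqqinv_qbin2].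
rewrite -[n]odd_double_half -mul2n; case: (odd n); rewrite ?add0n ?add1n.
  have [_ ->] := p_div_expansions n./2.
  by apply: in_Zqqinv_g_div_comb_eval => a; exact: coefZ.
case: n./2 => [|M]; first by rewrite muln0 /p_div qfact0 invr1 scale1r hornerC; exact: in_Zqqinv1.
have [-> _] := p_div_expansions M.
by apply: in_Zqqinv_g_div_comb_eval => a; exact: coefZ.
Qed.

End Field.
End QCalculus.

Lemma q_neq0 : q != 0.
Proof. by rewrite /q tofrac_eq0 polyX_eq0. Qed.

Lemma qX_neq1 n : (0 < n)%N -> q ^+ n != 1.
Proof.
move=> n_gt0; rewrite /q -tofracXn -tofrac1 tofrac_eq.
apply: contraTneq n_gt0 => /(congr1 (fun p : {poly rat} => size p)).
by rewrite size_polyXn size_poly1 => -[->].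
Qed.

Theorem proposition2p6 :
  (forall m : nat, (1 <= m)%N ->
     p_div (2 * m)%N =
       \sum_(0 <= a < m)
          (q ^ ((1 - 2 * m%:Z) * a%:Z) * qbin2 (m - 1)%N a) *: g_div (2 * m - 2 * a)%N
     /\
     p_div (2 * m - 1)%N =
       \sum_(0 <= a < m)
          (q ^ ((3 - 2 * m%:Z) * a%:Z) * qbin2 (m - 1)%N a) *: g_div (2 * m - 2 * a - 1)%N)
  /\
  (forall (n : nat) (l : int), in_Zqqinv (p_div n).[qint (2 * l)]).
Proof.
split; first exact: (@QCalculus.p_div_expansion K q q_neq0 qX_neq1).
exact: (@QCalculus.in_Zqqinv_p_div_eval K q q_neq0 qX_neq1).
Qed.
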